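(* Let $q$ be a prime power, $t$ an integer with $2\le t<q$, and $d$ a non-negative integer. Then there exists an $\left(\left\lfloor \frac{q-d}{t-1}\right\rfloor;d\right)$-CFF$(q^2+q,\,q^t)$.
   Context: A set system $(X,\mathcal F)$ (a finite point set $X$ and a set $\mathcal F$ of subsets called blocks) is an $(r;d)$-CFF$(N,T)$ if $|X|=N$, $|\mathcal F|=T$, and for any block $B_0\in\mathcal F$ and any $r$ other blocks $A_1,\dots,A_r\in\mathcal F\setminus\{B_0\}$ we have $\left|B_0\setminus\bigcup_{j=1}^r A_j\right|>d$. *)

From mathcomp Require Import all_boot.
Set Implicit Arguments. Unset Strict Implicit. Unset Printing Implicit Defensive.

Definition prime_power (q : nat) : Prop :=
  exists p k : nat, prime p /\ 0 < k /\ q = p ^ k.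

Definition cff_prop (X : finType) (r d : nat) (F : {set {set X}}) : Prop :=
  forall B0 : {set X}, B0 \in F ->
  forall A : r.-tuple {set X}, (forall j : 'I_r, tnth A j \in F :\ B0) ->
  d < #|B0 :\: \bigcup_(j < r) tnth A j|.

Definition is_CFF (r d N T : nat) (X : finType) (F : {set {set X}}) : Prop :=
  #|X| = N /\ #|F| = T /\ cff_prop r d F.

(** The blocks are the graphs of the polynomials of degree < t over the field
    F_q, extended to the projective line by assigning to the point at infinity
    the coefficient of X^(t-1). Two distinct such graphs meet in at most t - 1
    points, because their difference has at most t - 1 projective zeros; a block
    has q + 1 points, so r other blocks remove at most r (t - 1) <= q - d of
    them and leave more than d. *)

From mathcomp Require Import all_boot.
From mathcomp Require Import ssralg poly matrix mxpoly finalg finfield zify.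

Set Implicit Arguments.
Unset Strict Implicit.
Unset Printing Implicit Defensive.

Import GRing.Theory.

Lemma card_setI_bigcup (T : finType) (B : {set T}) r (A : 'I_r -> {set T}) :
  #|B :&: \bigcup_(j < r) A j| <= \sum_(j < r) #|B :&: A j|.
Proof.
apply: (big_ind2 (fun U n => #|B :&: U| <= n)) => [|U m V n leU leV|//].
  by rewrite setI0 cards0.
by rewrite setIUr (leq_trans (leq_card_setU _ _)) ?leq_add.
Qed.

Section BoundedMeets.

Variables (X : finType) (k lambda : nat).

Lemma cff_prop_bounded_meets (F : {set {set X}}) r d :
  (forall B, B \in F -> #|B| = k) ->
  (forall B C, B \in F -> C \in F -> B != C -> #|B :&: C| <= lambda) ->
  r * lambda + d < k -> cff_prop r d F.
Proof.
move=> cardF meetF ltk B0 FB0 A FA.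
have meet_bound : \sum_(j < r) #|B0 :&: tnth A j| <= r * lambda.
  rewrite -[r in r * _]card_ord -sum_nat_const; apply: leq_sum => j _.
  have /setD1P[neB0 FAj] := FA j.
  by rewrite meetF // eq_sym.
have := card_setI_bigcup B0 (fun j => tnth A j).
have := cardsID (\bigcup_(j < r) tnth A j) B0.
rewrite (cardF _ FB0); lia.
Qed.

Lemma bounded_meets_inj (I : finType) (B : I -> {set X}) :
  (forall i, #|B i| = k) ->
  (forall i j, i != j -> #|B i :&: B j| < k) -> injective B.
Proof.
move=> cardB meetB i j eqB; case: (eqVneq i j) => // /meetB.
by rewrite eqB setIid cardB ltnn.
Qed.

End BoundedMeets.

Section ProjectiveGraphs.

Variables (K : finFieldType) (n : nat).

Local Open Scope ring_scope.

(** A polynomial of size at most n.+1 is read as a form of degree n on the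
    projective line [option K], the point at infinity being [None]. *)
Definition proj_eval (p : {poly K}) (x : option K) : K :=
  if x is Some a then p.[a] else p`_n.

Lemma proj_evalB p p' x :
  proj_eval (p - p') x = proj_eval p x - proj_eval p' x.
Proof. by case: x => [a|] /=; rewrite (hornerD, coefB) ?hornerN. Qed.

Lemma card_roots (p : {poly K}) : p != 0 -> (#|[set a | root p a]| < size p)%N.
Proof.
move=> nz_p; rewrite cardE max_poly_roots ?enum_uniq //.
by apply/allP => a; rewrite mem_enum inE.
Qed.

Lemma card_proj_roots (p : {poly K}) :
  p != 0 -> (size p <= n.+1)%N -> (#|[set x | proj_eval p x == 0%R]| <= n)%N.
Proof.
move=> nz_p le_p_n1.
have roots_split : [set x | proj_eval p x == 0] \subset
    Some @: [set a | root p a] :|: (if p`_n == 0 then [set None] else set0).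
  apply/subsetP => -[a|]; rewrite !inE => /eqP /= p_x0.
    by rewrite imset_f // inE /root p_x0.
  by rewrite p_x0 eqxx set11 orbT.
apply: leq_trans (subset_leq_card roots_split) _.
apply: leq_trans (leq_card_setU _ _) _.
rewrite card_imset; last by move=> a b [].
have := card_roots nz_p; case: ifP => [/eqP pn0|_]; last by rewrite cards0; lia.
have le_p_n : (size p <= n)%N.
  by apply/leq_sizeP => j; rewrite leq_eqVlt => /predU1P[<- //|]; apply/leq_sizeP.
rewrite cards1 addn1; lia.
Qed.

Definition proj_graph (p : {poly K}) : {set option K * K} :=
  [set (x, proj_eval p x) | x : option K].

Lemma card_proj_graph p : #|proj_graph p| = #|K|.+1.
Proof. by rewrite card_imset ?card_option // => x y []. Qed.

Lemma card_proj_graphI (p p' : {poly K}) :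
  p != p' -> (size p <= n.+1)%N -> (size p' <= n.+1)%N ->
  (#|proj_graph p :&: proj_graph p'| <= n)%N.
Proof.
move=> neq_pp' le_p le_p'.
set E := [set x | proj_eval (p - p') x == 0].
have meet_sub : proj_graph p :&: proj_graph p' \subset
    [set (x, proj_eval p x) | x in E].
  apply/subsetP => _ /setIP[/imsetP[x _ ->] /imsetP[_ _ [<- eq_px]]].
  by rewrite imset_f // inE proj_evalB eq_px subrr.
apply: leq_trans (subset_leq_card meet_sub) _.
apply: leq_trans (leq_imset_card _ _) _.
rewrite card_proj_roots ?subr_eq0 //.
by rewrite (leq_trans (size_polyD _ _)) // geq_max size_polyN le_p.
Qed.

End ProjectiveGraphs.

Theorem mainTheorem5 (q t d : nat) :
  prime_power q -> 2 <= t -> t < q -> d <= q ->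
  exists (X : finType) (F : {set {set X}}),
    is_CFF ((q - d) %/ (t - 1)) d (q ^ 2 + q) (q ^ t) F.
Proof.
move=> [p [k [pr_p [k_gt0 ->]]]] t_ge2 t_lt_q d_le_q.
have [K _ card_K] := pPrimePowerField pr_p k_gt0.
pose block (v : 'rV[K]_t) := proj_graph t.-1 (rVpoly v).
have size_rVpoly (v : 'rV[K]_t) : size (rVpoly v) <= t.-1.+1.
  by rewrite prednK ?size_poly // ltnW.
have meet_block (v w : 'rV[K]_t) : v != w -> #|block v :&: block w| <= t.-1.
  move=> neq_vw; apply: card_proj_graphI => //.
  by apply: contra neq_vw => /eqP/(can_inj rVpolyK)->.
have inj_block : injective block.
  apply: (bounded_meets_inj (k := #|K|.+1)) => [v|v w /meet_block].
    exact: card_proj_graph.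
  by rewrite card_K; lia.
exists (option K * K)%type, [set block v | v : 'rV[K]_t].
split; first by rewrite card_prod card_option card_K; lia.
split; first by rewrite card_imset // card_mx card_K mul1n.
apply: (cff_prop_bounded_meets (k := #|K|.+1) (lambda := t.-1)).
- by move=> _ /imsetP[v _ ->]; apply: card_proj_graph.
- move=> _ _ /imsetP[v _ ->] /imsetP[w _ ->] neq_vw; apply: meet_block.
  by apply: contra neq_vw => /eqP->.
- have := leq_trunc_div (p ^ k - d) (t - 1); rewrite card_K; lia.
Qed.
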